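(* Let $E$ be a real Banach space and $F\subseteq E$ a closed subspace which is the range of a linear projection $P:E\to F$ with $\|P\|\le1$. Then: (i) $FBL[F]$ is isometrically order isomorphic to a closed sublattice of $FBL[E]$; (ii) $FBL[F]^*$ is isometrically order isomorphic to a $w^*$-closed band of $FBL[E]^*$.
   Context: For a real Banach space $E$ with dual $E^*$ and closed unit ball $B_E$, let $H[E]$ be the vector space of all positively homogeneous functions $f:E^*\to\mathbb R$ ($f(\lambda x^* )=\lambda f(x^* )$ for $\lambda>0$). For $f\in H[E]$ put $\|f\|_{FBL[E]}:=\sup\{\sum_{k=1}^n|f(x_k^* )| : n\in\mathbb N,\ x_1^*,\dots,x_n^*\in E^*,\ \sup_{x\in B_E}\sum_{k=1}^n|x_k^*(x)|\le 1\}$. $H_0[E]:=\{f\in H[E]:\|f\|_{FBL[E]}<\infty\}$ is a Banach lattice with this norm and pointwise order/operations. For $x\in E$ let $\delta_x(x^* )=x^*(x)$. $FBL[E]$ is the closed sublattice of $H_0[E]$ generated by $\{\delta_x:x\in E\}$; $FBL[F]$ is defined likewise for the Banach space $F$. *)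

From HB Require Import structures.
From mathcomp Require Import all_boot all_order all_algebra.
From mathcomp Require Import all_classical all_reals all_analysis.
Unset Printing Implicit Defensive.
Import Order.TTheory GRing.Theory Num.Theory.
Import numFieldNormedType.Exports.
Local Open Scope classical_set_scope.
Local Open Scope ring_scope.

Section FBL.
Context {R : realType}.
Variable E : normedModType R.

Definition is_dual_elt (x : E -> R) : Prop :=
  (forall (a : R) (u v : E), x (a *: u + v) = a * x u + x v) /\ continuous x.

Definition dualsp := {x : E -> R | is_dual_elt x}.

Definition pos_homog (f : dualsp -> R) : Prop :=
  forall (x y : dualsp) (l : R), 0 < l ->
    (forall e : E, sval y e = l * sval x e) -> f y = l * f x.

Definition fbl_adm (s : seq dualsp) : Prop :=
  forall e : E, `|e| <= 1 -> \sum_(x <- s) `|sval x e| <= 1.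

Definition fblnorm (f : dualsp -> R) : \bar R :=
  ereal_sup [set ((\sum_(x <- s) `|f x|)%:E) | s in fbl_adm].

Definition H0 : set (dualsp -> R) :=
  [set f | pos_homog f /\ (fblnorm f < +oo)%E].

Definition fbl_delta (e : E) : dualsp -> R := fun x => sval x e.

Definition is_closed_sublattice (S : set (dualsp -> R)) : Prop :=
  [/\ S `<=` H0,
      S (fun _ => 0),
      (forall (a : R) f g, S f -> S g -> S (fun x => a * f x + g x)),
      (forall f g, S f -> S g -> S (fun x => Num.max (f x) (g x)))
    & (forall f, H0 f ->
         (forall eps : R, 0 < eps ->
            exists2 g, S g & (fblnorm (fun x => (f x - g x)%R) < eps%:E)%E) ->
         S f)].

Definition FBL : set (dualsp -> R) :=
  [set f | forall S, is_closed_sublattice S ->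
                     (forall e : E, S (fbl_delta e)) -> S f].

(* ---- the dual Banach lattice FBL[E]^* ----
   functionals are represented by maps (dualsp -> R) -> R, only their values on
   FBL[E] matter (two of them are identified when they agree on FBL[E]). *)
Definition fbl_dual : set ((dualsp -> R) -> R) :=
  [set phi | (forall (a : R) f g, FBL f -> FBL g ->
                 phi (fun x => a * f x + g x) = a * phi f + phi g)
           /\ exists C : R, forall f, FBL f -> (`|phi f|%:E <= C%:E * fblnorm f)%E].

Definition dual_eqv (phi psi : (dualsp -> R) -> R) : Prop :=
  forall f, FBL f -> phi f = psi f.

Definition dual_norm (phi : (dualsp -> R) -> R) : \bar R :=
  ereal_sup [set (`|phi f|)%:E | f in [set f | FBL f /\ (fblnorm f <= 1)%E]].

Definition dual_le (phi psi : (dualsp -> R) -> R) : Prop :=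
  forall f, FBL f -> (forall x, 0 <= f x) -> phi f <= psi f.

(* Riesz–Kantorovich: |phi|(f) = sup { |phi g| : g in FBL[E], |g| <= f } for f >= 0 *)
Definition dual_abs (phi : (dualsp -> R) -> R) (f : dualsp -> R) : \bar R :=
  ereal_sup [set (`|phi g|)%:E | g in [set g | FBL g /\ forall x, `|g x| <= f x]].

Definition dual_abs_le (phi psi : (dualsp -> R) -> R) : Prop :=
  forall f, FBL f -> (forall x, 0 <= f x) -> (dual_abs phi f <= dual_abs psi f)%E.

Definition dual_lub (D : set ((dualsp -> R) -> R)) (phi : (dualsp -> R) -> R) : Prop :=
  [/\ fbl_dual phi,
      (forall psi, D psi -> dual_le psi phi)
    & (forall chi, fbl_dual chi -> (forall psi, D psi -> dual_le psi chi) -> dual_le phi chi)].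

Definition is_band (J : set ((dualsp -> R) -> R)) : Prop :=
  [/\ J `<=` fbl_dual,
      J (fun _ => 0),
      (forall (a : R) phi psi, J phi -> J psi -> J (fun f => a * phi f + psi f)),
      (forall phi psi, fbl_dual phi -> J psi -> dual_abs_le phi psi -> J phi)
    & (forall D phi, D `<=` J -> dual_lub D phi -> J phi)].

(* J is closed in FBL[E]^* for the weak* topology sigma(FBL[E]^*, FBL[E]) *)
Definition wstar_closed (J : set ((dualsp -> R) -> R)) : Prop :=
  forall phi, fbl_dual phi ->
    (forall (n : nat) (g : 'I_n -> dualsp -> R) (eps : R),
        (forall i, FBL (g i)) -> 0 < eps ->
        exists2 psi, J psi & forall i, `|psi (g i) - phi (g i)| < eps) ->
    J phi.

End FBL.

Arguments pos_homog {R E}.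
Arguments fbl_adm {R E}.
Arguments fblnorm {R E}.
Arguments is_closed_sublattice {R E}.
Arguments dual_eqv {R E}.
Arguments dual_norm {R E}.
Arguments dual_le {R E}.
Arguments dual_abs {R E}.
Arguments dual_abs_le {R E}.
Arguments dual_lub {R E}.
Arguments is_band {R E}.
Arguments wstar_closed {R E}.

Definition fbl_isometric_order_embedding {R : realType} (F E : normedModType R)
  (T : (dualsp F -> R) -> (dualsp E -> R)) : Prop :=
  [/\ (forall f, FBL F f -> FBL E (T f)),
      (forall (a : R) f g, FBL F f -> FBL F g ->
          T (fun x => a * f x + g x) = (fun y => a * T f y + T g y)),
      (forall f g, FBL F f -> FBL F g ->
          T (fun x => Num.max (f x) (g x)) = (fun y => Num.max (T f y) (T g y))),
      (forall f g, FBL F f -> FBL F g ->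
          ((forall x, f x <= g x) <-> (forall y, T f y <= T g y)))
    & (forall f, FBL F f -> fblnorm (T f) = fblnorm f)].

Definition dual_isometric_order_iso {R : realType} (F E : normedModType R)
  (S : ((dualsp F -> R) -> R) -> ((dualsp E -> R) -> R))
  (J : set ((dualsp E -> R) -> R)) : Prop :=
  (forall phi, fbl_dual F phi -> J (S phi)) /\
      (forall phi phi', fbl_dual F phi -> fbl_dual F phi' ->
          dual_eqv phi phi' -> dual_eqv (S phi) (S phi')) /\
      (forall (a : R) phi psi, fbl_dual F phi -> fbl_dual F psi ->
          dual_eqv (S (fun f => a * phi f + psi f)) (fun f => a * S phi f + S psi f)) /\
      (forall phi psi, fbl_dual F phi -> fbl_dual F psi ->
          dual_eqv (S phi) (S psi) -> dual_eqv phi psi) /\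
      (forall chi, J chi -> exists2 phi, fbl_dual F phi & dual_eqv (S phi) chi) /\
      (forall phi psi, fbl_dual F phi -> fbl_dual F psi ->
          (dual_le phi psi <-> dual_le (S phi) (S psi))) /\
    (forall phi, fbl_dual F phi -> dual_norm (S phi) = dual_norm phi).

From HB Require Import structures.
From mathcomp Require Import all_boot all_order all_algebra.
From mathcomp Require Import all_classical all_reals all_analysis.
From mathcomp Require Import ring lra.
Import Order.TTheory GRing.Theory Num.Theory.
Import numFieldNormedType.Exports.
Local Open Scope classical_set_scope.
Local Open Scope ring_scope.

(* The contractions [iota] and [P] induce lattice homomorphisms
   [T f = f \o iota^*] and [Q g = g \o P^*] between the free Banach lattices;
   both are contractive and [Q \o T = id] because [P \o iota = id].  Hence [T] is
   an isometric lattice embedding, and its range is the fixed-point set of the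
   contractive projection [T Q], hence closed.  Dually, [phi |-> phi \o Q]
   identifies FBL[F]^* with the annihilator [J] of the ideal [ker Q]: [J] is
   weak*-closed as an annihilator, solid because [ker Q] is, and if
   [phi = sup D] with [D] in [J], then [phi \o T Q] is again an upper bound of
   [D], which forces [phi] to vanish on the positive part of [ker Q]. *)

Section FreeBanachLattice.
Context {R : realType} {A : normedModType R}.
Implicit Types (f g k : dualsp A -> R) (phi psi : (dualsp A -> R) -> R).

Lemma dualsp_ext (x y : dualsp A) : (forall e, sval x e = sval y e) -> x = y.
Proof.
case: x y => [x hx] [y hy] /= /funext exy; subst y.
by congr exist; exact: Prop_irrelevance.
Qed.

Lemma dualsp0 (x : dualsp A) : sval x 0 = 0.
Proof.
have := proj1 (svalP x) (-1) 0 0.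
by rewrite scaler0 addr0 mulN1r addNr.
Qed.

Lemma dualspZ (x : dualsp A) c e : sval x (c *: e) = c * sval x e.
Proof. by have := proj1 (svalP x) c e 0; rewrite addr0 dualsp0 addr0. Qed.

Lemma dualsp_scale_proof c (x : dualsp A) : is_dual_elt A (fun e => c * sval x e).
Proof.
split; first by move=> a u v; rewrite (proj1 (svalP x)); ring.
by move=> t; apply: continuousM; [exact: cst_continuous | exact: (proj2 (svalP x))].
Qed.

Definition dualsp_scale c x : dualsp A := exist _ _ (dualsp_scale_proof c x).

Lemma adm_scaled_singleton (x : dualsp A) :
  exists2 c : R, 0 < c & fbl_adm [:: dualsp_scale c x].
Proof.
have /cvgrPdist_lt /(_ 1 ltr01) := proj2 (svalP x) 0.
rewrite dualsp0 => /nbhs_norm0P [d /= d0 hd].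
exists (d / 2); first by rewrite divr_gt0.
move=> e he; rewrite big_seq1 /= -dualspZ.
have : `|(d / 2) *: e| < d.
  by rewrite normrZ gtr0_norm ?divr_gt0 //; have := normr_ge0 e; nra.
by move/hd; rewrite /= sub0r normrN => /ltW.
Qed.

Definition fbl_bounded f (c : R) :=
  forall s, fbl_adm s -> \sum_(x <- s) `|f x| <= c.

Lemma fblnorm_leP f c : (fblnorm f <= c%:E)%E <-> fbl_bounded f c.
Proof.
split=> [h s hs | h].
  by rewrite -lee_fin; apply: le_trans h; apply: ereal_sup_ubound; exists s.
by apply: ge_ereal_sup => _ [s hs <-]; rewrite lee_fin; apply: h.
Qed.

Lemma adm_nil : fbl_adm ([::] : seq (dualsp A)).
Proof. by move=> e _; rewrite big_nil. Qed.

Lemma fblnorm_ge0 f : (0 <= fblnorm f)%E.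
Proof. by apply: ereal_sup_ubound; exists [::]; rewrite ?big_nil //; exact: adm_nil. Qed.

Lemma fblnorm_ltyP f : (fblnorm f < +oo)%E <-> exists c, fbl_bounded f c.
Proof.
split=> [|[c /fblnorm_leP h]]; last exact: le_lt_trans h (ltry _).
move: (fblnorm_ge0 f) (fblnorm_leP f).
by case: (fblnorm f) => [r _ hle _| |] //; exists r; apply/hle.
Qed.

Lemma fbl_bounded_le f c c' : fbl_bounded f c -> c <= c' -> fbl_bounded f c'.
Proof. by move=> h hc s hs; apply: le_trans (h s hs) hc. Qed.

Lemma fbl_bounded_lin a f g cf cg : fbl_bounded f cf -> fbl_bounded g cg ->
  fbl_bounded (fun x => a * f x + g x) (`|a| * cf + cg).
Proof.
move=> hf hg s hs.
apply: (@le_trans _ _ (\sum_(x <- s) (`|a| * `|f x| + `|g x|))).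
  by apply: ler_sum => x _; rewrite -normrM; apply: ler_normD.
rewrite big_split /= -mulr_sumr; apply: lerD; last exact: hg.
by apply: ler_wpM2l => //; apply: hf.
Qed.

Lemma fbl_bounded_max f g cf cg : fbl_bounded f cf -> fbl_bounded g cg ->
  fbl_bounded (fun x => Num.max (f x) (g x)) (cf + cg).
Proof.
move=> hf hg s hs.
apply: (@le_trans _ _ (\sum_(x <- s) (`|f x| + `|g x|))).
  apply: ler_sum => x _; have := normr_ge0 (f x); have := normr_ge0 (g x).
  by case: (leP (f x) (g x)) => _ h1 h2; lra.
by rewrite big_split /=; apply: lerD; [apply: hf | apply: hg].
Qed.

(* A singleton [[:: c x]] is admissible, so a norm-null [k] vanishes at [x]. *)
Lemma pos_homog_fbl_bounded_eq0 k : pos_homog k ->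
  (forall eps, 0 < eps -> fbl_bounded k eps) -> forall x, k x = 0.
Proof.
move=> hk small x; have [c c0 adm1] := adm_scaled_singleton x.
have kc : k (dualsp_scale c x) = c * k x by apply: hk.
apply/eqP; apply: contraT => kx0.
have m0 : 0 < `|c * k x| by rewrite normr_gt0 mulf_neq0 // gt_eqF.
have := small (`|c * k x| / 2) (divr_gt0 m0 (ltr0Sn _ 1)) _ adm1.
rewrite big_seq1 kc; lra.
Qed.

Lemma pos_homog_lin a f g : pos_homog f -> pos_homog g ->
  pos_homog (fun x => a * f x + g x).
Proof. by move=> hf hg x y l l0 hy; rewrite (hf x y l l0 hy) (hg x y l l0 hy); ring. Qed.

Lemma pos_homog_max f g : pos_homog f -> pos_homog g ->
  pos_homog (fun x => Num.max (f x) (g x)).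
Proof.
by move=> hf hg x y l l0 hy; rewrite (hf x y l l0 hy) (hg x y l l0 hy) maxr_pMr // ltW.
Qed.

Lemma H0P f : H0 A f <-> pos_homog f /\ exists c, fbl_bounded f c.
Proof. by split=> -[h1 h2]; split=> //; apply/fblnorm_ltyP. Qed.

Lemma H0_delta e : H0 A (fbl_delta A e).
Proof.
apply/H0P; split=> [x y l _ hy|]; first exact: hy.
exists (`|e| + 1) => s hs; have c0 : 0 < `|e| + 1 by rewrite ltr_wpDl.
set e' := (`|e| + 1)^-1 *: e.
have ee' : e = (`|e| + 1) *: e' by rewrite /e' scalerA mulfV ?gt_eqF // scale1r.
have e'1 : `|e'| <= 1.
  by rewrite /e' normrZ gtr0_norm ?invr_gt0 // ler_pdivrMl // mulr1; lra.
rewrite (eq_bigr (fun x => (`|e| + 1) * `|sval x e'|)); last first.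
  by move=> x _; rewrite /fbl_delta {1}ee' dualspZ normrM (gtr0_norm c0).
by rewrite -mulr_sumr -[leRHS]mulr1; apply: ler_wpM2l; [exact: ltW | exact: hs].
Qed.

Lemma H0_closed_sublattice : is_closed_sublattice (H0 A).
Proof.
split=> //.
- apply/H0P; split; first by move=> *; rewrite mulr0.
  by exists 0 => s _; rewrite big1 // => x _; rewrite normr0.
- move=> a f g /H0P [pf [cf hf]] /H0P [pg [cg hg]]; apply/H0P.
  by split; [exact: pos_homog_lin | exists (`|a| * cf + cg); exact: fbl_bounded_lin].
- move=> f g /H0P [pf [cf hf]] /H0P [pg [cg hg]]; apply/H0P.
  by split; [exact: pos_homog_max | exists (cf + cg); exact: fbl_bounded_max].
Qed.

Lemma FBL_H0 f : FBL A f -> H0 A f.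
Proof. by apply; [exact: H0_closed_sublattice | exact: H0_delta]. Qed.

Lemma FBL0 : FBL A (fun _ => 0).
Proof. by move=> S [] _ h0 _ _ _ _. Qed.

Lemma FBL_lin a f g : FBL A f -> FBL A g -> FBL A (fun x => a * f x + g x).
Proof.
by move=> hf hg S hS hd; case: (hS) => _ _ hl _ _; apply: hl; [apply: hf | apply: hg].
Qed.

Lemma FBL_max f g : FBL A f -> FBL A g -> FBL A (fun x => Num.max (f x) (g x)).
Proof.
by move=> hf hg S hS hd; case: (hS) => _ _ _ hm _; apply: hm; [apply: hf | apply: hg].
Qed.

Lemma FBL_delta e : FBL A (fbl_delta A e).
Proof. by move=> S _; apply. Qed.

Lemma FBL_closed f : H0 A f ->
  (forall eps : R, 0 < eps ->
     exists2 g, FBL A g & (fblnorm (fun x => (f x - g x)%R) < eps%:E)%E) ->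
  FBL A f.
Proof.
move=> hf approx S hS hd; case: (hS) => _ _ _ _; apply=> // eps e0.
by have [g hg hn] := approx eps e0; exists g => //; exact: hg.
Qed.

Lemma FBL_opp f : FBL A f -> FBL A (fun x => - f x).
Proof.
move=> hf; have := FBL_lin (-1) _ _ hf FBL0.
by congr FBL; apply/funext => x; rewrite mulN1r addr0.
Qed.

Lemma FBL_sub f g : FBL A f -> FBL A g -> FBL A (fun x => f x - g x).
Proof.
move=> hf hg; have := FBL_lin (-1) _ _ hg hf.
by congr FBL; apply/funext => x; rewrite mulN1r addrC.
Qed.

Lemma FBL_funrpos f : FBL A f -> FBL A f^\+.
Proof. by move=> hf; exact: FBL_max _ _ hf FBL0. Qed.

Lemma FBL_funrneg f : FBL A f -> FBL A f^\-.
Proof. by move=> hf; rewrite -funrposN; exact: FBL_funrpos (FBL_opp _ hf). Qed.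

Lemma FBL_abs f : FBL A f -> FBL A (fun x => `|f x|).
Proof.
move=> hf; have := FBL_max _ _ hf (FBL_opp _ hf).
by congr FBL; apply/funext => x; rewrite maxrN.
Qed.

Lemma fblnormE f : FBL A f -> exists2 r : R, 0 <= r & fblnorm f = r%:E.
Proof.
move=> /FBL_H0 [_]; move: (fblnorm_ge0 f).
by case: (fblnorm f) => [r| |] // r0 _; exists r.
Qed.

Lemma fbl_dualI phi :
  (forall (a : R) f g, FBL A f -> FBL A g ->
     phi (fun x => a * f x + g x) = a * phi f + phi g) ->
  (exists C, forall f r, FBL A f -> fblnorm f = r%:E -> `|phi f| <= C * r) ->
  fbl_dual A phi.
Proof.
move=> hl [C hC]; split=> //; exists C => f hf.
by have [r r0 hr] := fblnormE _ hf; rewrite hr -EFinM lee_fin; exact: hC hr.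
Qed.

Lemma fbl_dual_bound phi : fbl_dual A phi ->
  exists2 C, 0 <= C & forall f r, FBL A f -> fblnorm f = r%:E -> `|phi f| <= C * r.
Proof.
move=> [_ [C hC]]; exists (Num.max C 0); first by rewrite le_max lexx orbT.
move=> f r hf hr; have := hC f hf; rewrite hr -EFinM lee_fin => /le_trans; apply.
have [r' r0 hr'] := fblnormE _ hf; move: hr; rewrite hr' => -[<-].
by apply: ler_wpM2r => //; rewrite le_max lexx.
Qed.

Lemma fbl_dual_at0 phi : fbl_dual A phi -> phi (fun _ => 0) = 0.
Proof.
move=> [hl _]; have := hl (-1) _ _ FBL0 FBL0.
have -> : (fun x : dualsp A => -1 * 0 + 0) = (fun _ => 0 : R).
  by apply/funext => x; rewrite mulr0 addr0.
by rewrite mulN1r addNr.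
Qed.

Lemma fbl_dualB phi f g : fbl_dual A phi -> FBL A f -> FBL A g ->
  phi (fun x => f x - g x) = phi f - phi g.
Proof.
move=> [hl _] hf hg; have := hl (-1) _ _ hg hf; rewrite mulN1r addrC => <-.
by congr phi; apply/funext => x; rewrite mulN1r addrC.
Qed.

Lemma fbl_dual0 : fbl_dual A (fun _ => 0).
Proof.
apply: fbl_dualI; first by move=> *; rewrite mulr0 addr0.
by exists 0 => f r _ _; rewrite normr0 mul0r.
Qed.

Lemma fbl_dual_lin a phi psi : fbl_dual A phi -> fbl_dual A psi ->
  fbl_dual A (fun f => a * phi f + psi f).
Proof.
move=> hphi hpsi.
have [C1 C10 h1] := fbl_dual_bound _ hphi; have [C2 C20 h2] := fbl_dual_bound _ hpsi.
apply: fbl_dualI => [b f g hf hg|].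
  by rewrite (proj1 hphi) // (proj1 hpsi) //; ring.
exists (`|a| * C1 + C2) => f r hf hr.
apply: le_trans (ler_normD _ _) _; rewrite normrM mulrDl -mulrA.
by apply: lerD; [apply: ler_wpM2l => //; exact: h1 | exact: h2].
Qed.

End FreeBanachLattice.

Section ContractionLift.
Context {R : realType} {A B : normedModType R} {L : A -> B}.
Hypothesis L_lin : forall (a : R) (u v : A), L (a *: u + v) = a *: L u + L v.
Hypothesis L_le : forall u : A, `|L u| <= `|u|.

Lemma contraction_continuous : continuous L.
Proof.
have LB u v : L (u - v) = L u - L v.
  by have := L_lin (-1) v u; rewrite !scaleN1r addrC => ->; rewrite addrC.
move=> a; apply/cvgrPdist_lt => e e0; near=> t.
rewrite -LB; apply: le_lt_trans (L_le _) _; near: t.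
exact: (@cvgr_dist_lt _ _ _ _ _ id).
Unshelve. all: by end_near.
Qed.

Lemma adjoint_proof (x : dualsp B) : is_dual_elt A (fun a => sval x (L a)).
Proof.
split; first by move=> a u v; rewrite L_lin (proj1 (svalP x)).
by move=> t; apply: continuous_comp (contraction_continuous t) _; exact: (proj2 (svalP x)).
Qed.

Definition adjoint (x : dualsp B) : dualsp A := exist _ _ (adjoint_proof x).

(* The lattice homomorphism FBL[A] -> FBL[B] extending [L]: it maps
   [delta_a] to [delta_(L a)]. *)
Definition fbl_map (g : dualsp A -> R) : dualsp B -> R := fun x => g (adjoint x).

Lemma adm_map_adjoint s : fbl_adm s -> fbl_adm (map adjoint s).
Proof. by move=> hs a ha; rewrite big_map; apply: hs; exact: le_trans (L_le a) ha. Qed.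

Lemma fbl_bounded_map g c : fbl_bounded g c -> fbl_bounded (fbl_map g) c.
Proof. by move=> hg s /adm_map_adjoint /hg; rewrite big_map. Qed.

Lemma fblnorm_map_le g : (fblnorm (fbl_map g) <= fblnorm g)%E.
Proof.
apply: ereal_sup_le => _ [s hs <-]; exists (map adjoint s); last by rewrite big_map.
exact: adm_map_adjoint.
Qed.

Lemma pos_homog_map g : pos_homog g -> pos_homog (fbl_map g).
Proof. by move=> hg x y l l0 hy; apply: hg => // a; exact: hy. Qed.

Lemma H0_map g : H0 A g -> H0 B (fbl_map g).
Proof.
move=> /H0P [hp [c hc]]; apply/H0P.
by split; [exact: pos_homog_map | exists c; exact: fbl_bounded_map].
Qed.

Lemma FBL_map g : FBL A g -> FBL B (fbl_map g).
Proof.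
suff : is_closed_sublattice [set g | H0 A g /\ FBL B (fbl_map g)].
  move=> hS hg; apply: (proj2 (hg _ hS _)) => e.
  by split; [exact: H0_delta | exact: FBL_delta].
have [_ h0 hl hm _] := @H0_closed_sublattice _ A.
split.
- by move=> f [].
- by split=> //; exact: FBL0.
- by move=> a f h [hf1 hf2] [hh1 hh2]; split; [exact: hl | exact: FBL_lin].
- by move=> f h [hf1 hf2] [hh1 hh2]; split; [exact: hm | exact: FBL_max].
- move=> f hf approx; split=> //; apply: FBL_closed; first exact: H0_map.
  move=> eps e0; have [h [_ hh] hn] := approx eps e0; exists (fbl_map h) => //.
  exact: le_lt_trans (fblnorm_map_le (fun x => f x - h x)) hn.
Qed.

Lemma fbl_dual_comp_map phi : fbl_dual B phi -> fbl_dual A (fun g => phi (fbl_map g)).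
Proof.
move=> hphi; have [C C0 hC] := fbl_dual_bound _ hphi.
apply: fbl_dualI => [a f g hf hg|]; first by rewrite -(proj1 hphi) //; exact: FBL_map.
exists C => f r hf hr; have hf' := FBL_map _ hf.
have [r' r0 hr'] := fblnormE _ hf'; apply: le_trans (hC _ _ hf' hr') _.
by apply: ler_wpM2l => //; have := fblnorm_map_le f; rewrite hr hr' lee_fin.
Qed.

End ContractionLift.

Arguments fbl_map {R A B L} L_lin L_le g.
Arguments adjoint {R A B L} L_lin L_le x.

Section ContractiveRetract.
Context {R : realType} {E F : normedModType R} {iota : F -> E} {P : E -> F}.
Hypothesis iota_lin : forall (a : R) (u v : F), iota (a *: u + v) = a *: iota u + iota v.
Hypothesis iota_le : forall y : F, `|iota y| <= `|y|.
Hypothesis P_lin : forall (a : R) (u v : E), P (a *: u + v) = a *: P u + P v.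
Hypothesis P_le : forall x : E, `|P x| <= `|x|.
Hypothesis P_iota : forall y : F, P (iota y) = y.

Local Notation T := (fbl_map iota_lin iota_le).
Local Notation Q := (fbl_map P_lin P_le).

Lemma adjointK : cancel (adjoint P_lin P_le) (adjoint iota_lin iota_le).
Proof. by move=> y; apply: dualsp_ext => a /=; rewrite P_iota. Qed.

Lemma fbl_mapK : cancel T Q.
Proof. by move=> f; apply/funext => y; rewrite /fbl_map adjointK. Qed.

Lemma fblnorm_T f : fblnorm (T f) = fblnorm f.
Proof.
apply/le_anti; rewrite fblnorm_map_le /=.
by rewrite -[X in (fblnorm X <= _)%E](fbl_mapK f) fblnorm_map_le.
Qed.

Lemma T_isometric_order_embedding : fbl_isometric_order_embedding F E T.
Proof.
split=> //; [exact: FBL_map | | by move=> f _; exact: fblnorm_T].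
move=> f g _ _; split=> [le_fg x | le_Tfg y]; first exact: le_fg.
have le_QT : Q (T f) y <= Q (T g) y by exact: le_Tfg.
by rewrite !fbl_mapK in le_QT.
Qed.

Lemma Q_sub_T h g : (fun y => Q h y - g y) = Q (fun x => h x - T g x).
Proof. by apply/funext => y; rewrite -[in LHS](fbl_mapK g). Qed.

(* [h - TQh = d - TQd] for [d = h - Tg], so [TQ] fixes the closure of the
   range of [T]. *)
Lemma TQ_fixes_approx h : H0 E h ->
  (forall eps, 0 < eps ->
     exists2 g, FBL F g & (fblnorm (fun x => (h x - T g x)%R) < eps%:E)%E) ->
  T (Q h) = h.
Proof.
move=> [hh _] approx; apply/funext => x; apply/eqP; rewrite eq_sym -subr_eq0; apply/eqP.
pose k x := -1 * T (Q h) x + h x.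
have pk : pos_homog k by apply: pos_homog_lin => //; do 2 apply: pos_homog_map.
suff small eps : 0 < eps -> fbl_bounded k eps.
  by have := pos_homog_fbl_bounded_eq0 _ pk small x; rewrite /k mulN1r addrC.
move=> e0; have [g hg /ltW /fblnorm_leP hd] := approx _ (divr_gt0 e0 (ltr0Sn _ 1)).
set d := (fun x => _) in hd.
have -> : k = fun x => -1 * T (Q d) x + d x.
  by apply/funext => y; rewrite /k /d /fbl_map adjointK; ring.
have hTQd := fbl_bounded_map iota_lin iota_le _ _ (fbl_bounded_map P_lin P_le _ _ hd).
apply: fbl_bounded_le (fbl_bounded_lin (-1) _ _ _ _ hTQd hd) _.
by rewrite normrN normr1; lra.
Qed.

Lemma T_range_closed_sublattice : is_closed_sublattice (T @` FBL F).
Proof.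
split.
- by move=> _ [f hf <-]; apply: FBL_H0; exact: FBL_map.
- by exists (fun _ => 0); [exact: FBL0 |].
- move=> a _ _ [f hf <-] [g hg <-]; exists (fun x => a * f x + g x) => //.
  exact: FBL_lin.
- move=> _ _ [f hf <-] [g hg <-]; exists (fun x => Num.max (f x) (g x)) => //.
  exact: FBL_max.
- move=> h hh approx_range.
  have approx (eps : R) : 0 < eps ->
      exists2 g, FBL F g & (fblnorm (fun x => (h x - T g x)%R) < eps%:E)%E.
    by move=> e0; have [_ [g hg <-] hn] := approx_range eps e0; exists g.
  exists (Q h); last exact: TQ_fixes_approx.
  apply: FBL_closed => [|eps e0]; first exact: H0_map.
  have [g hg hn] := approx eps e0; exists g; rewrite // Q_sub_T.
  exact: le_lt_trans (fblnorm_map_le _ _ _) hn.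
Qed.

Definition in_ker_Q (k : dualsp E -> R) :=
  forall y : dualsp F, k (adjoint P_lin P_le y) = 0.

Definition ann_ker_Q : set ((dualsp E -> R) -> R) :=
  [set chi | fbl_dual E chi /\ forall k, FBL E k -> in_ker_Q k -> chi k = 0].

Definition dual_Q (phi : (dualsp F -> R) -> R) : (dualsp E -> R) -> R :=
  fun g => phi (Q g).

Lemma in_ker_Q_sub_TQ g : in_ker_Q (fun x => g x - T (Q g) x).
Proof. by move=> y; rewrite /fbl_map adjointK subrr. Qed.

Lemma ann_ker_Q_TQ chi g : ann_ker_Q chi -> FBL E g -> chi g = chi (T (Q g)).
Proof.
move=> [hchi chi0] hg; have hTQg : FBL E (T (Q g)) by do 2 apply: FBL_map.
apply/eqP; rewrite -subr_eq0 -fbl_dualB //; apply/eqP.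
by apply: chi0; [exact: FBL_sub | exact: in_ker_Q_sub_TQ].
Qed.

Lemma ann_ker_Q_solid phi psi : fbl_dual E phi -> ann_ker_Q psi ->
  dual_abs_le phi psi -> ann_ker_Q phi.
Proof.
move=> hphi [hpsi psi0] le_phi_psi; split=> // k hk k0.
have abs_psi0 : (dual_abs psi (fun x => `|k x|%R) <= 0)%E.
  apply: ge_ereal_sup => _ [g [hg le_gk] <-]; rewrite psi0 ?normr0 // => y.
  by have := le_gk (adjoint P_lin P_le y); rewrite k0 normr0 normr_le0 => /eqP.
have abs_phi : (`|phi k|%:E <= dual_abs phi (fun x => `|k x|%R))%E.
  by apply: ereal_sup_ubound; exists k.
have := le_phi_psi _ (FBL_abs _ hk) (fun x => normr_ge0 (k x)).
by move=> /(le_trans abs_phi) /le_trans /(_ abs_psi0); rewrite lee_fin normr_le0 => /eqP.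
Qed.

Lemma ann_ker_Q_of_pos phi : fbl_dual E phi ->
  (forall k, FBL E k -> (forall x, 0 <= k x) -> in_ker_Q k -> phi k = 0) ->
  ann_ker_Q phi.
Proof.
move=> hphi pos0; split=> // k hk k0.
have k0p : in_ker_Q k^\+ by move=> y; rewrite /funrpos k0 maxxx.
have k0n : in_ker_Q k^\- by move=> y; rewrite /funrneg k0 oppr0 maxxx.
have -> : k = (fun x => k^\+ x - k^\- x).
  by apply/funext => x; rewrite -[in LHS](funrposBneg k).
have hkp := FBL_funrpos _ hk; have hkn := FBL_funrneg _ hk.
by rewrite fbl_dualB // !pos0 ?subrr.
Qed.

Lemma ann_ker_Q_lub D phi : D `<=` ann_ker_Q -> dual_lub D phi -> ann_ker_Q phi.
Proof.
move=> DJ [hphi ub lub]; apply: ann_ker_Q_of_pos => // k hk k_ge0 k0.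
pose chi f := phi (T (Q f)).
have hchi : fbl_dual E chi.
  exact: fbl_dual_comp_map P_lin P_le _ (fbl_dual_comp_map iota_lin iota_le _ hphi).
have le_phi_chi : dual_le phi chi.
  apply: (lub chi hchi) => psi Dpsi f hf f_ge0.
  rewrite (ann_ker_Q_TQ _ _ (DJ _ Dpsi) hf).
  by apply: (ub _ Dpsi) => [|x]; [do 2 apply: FBL_map | exact: f_ge0].
have TQk0 : T (Q k) = fun _ => 0 by apply/funext => x; exact: k0.
apply/le_anti/andP; split.
  by have := le_phi_chi _ hk k_ge0; rewrite /chi TQk0 fbl_dual_at0.
have [[psi Dpsi]|noD] := pselect (exists psi, D psi).
  by have := ub _ Dpsi _ hk k_ge0; rewrite (proj2 (DJ _ Dpsi)).
have ub2 psi : D psi -> dual_le psi (fun f => 2 * phi f + 0).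
  by move=> Dpsi; case: noD; exists psi.
by have := lub _ (fbl_dual_lin 2 _ _ hphi fbl_dual0) ub2 _ hk k_ge0; lra.
Qed.

Lemma ann_ker_Q_band : is_band ann_ker_Q.
Proof.
split.
- by move=> chi [].
- by split; [exact: fbl_dual0 | move=> *].
- move=> a phi psi [hphi phi0] [hpsi psi0]; split; first exact: fbl_dual_lin.
  by move=> k hk k0; rewrite phi0 // psi0 // mulr0 addr0.
- exact: ann_ker_Q_solid.
- exact: ann_ker_Q_lub.
Qed.

Lemma ann_ker_Q_wstar_closed : wstar_closed ann_ker_Q.
Proof.
move=> phi hphi approx; split=> // k hk k0.
apply/eqP; apply: contraT; rewrite -normr_gt0 => phik_gt0.
have [psi [_ psi0] close] := approx 1 (fun _ => k) _ (fun _ => hk) phik_gt0.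
by have := close ord0; rewrite psi0 // sub0r normrN ltxx.
Qed.

Lemma dual_Q_ann phi : fbl_dual F phi -> ann_ker_Q (dual_Q phi).
Proof.
move=> hphi; split=> [|k hk k0]; first exact: fbl_dual_comp_map.
have -> : dual_Q phi k = phi (fun _ => 0) by congr phi; apply/funext.
exact: fbl_dual_at0.
Qed.

Lemma dual_Q_onto chi : ann_ker_Q chi ->
  exists2 phi, fbl_dual F phi & dual_eqv (dual_Q phi) chi.
Proof.
move=> hchi; exists (fun f => chi (T f)).
  exact: fbl_dual_comp_map iota_lin iota_le _ (proj1 hchi).
by move=> g hg; symmetry; exact: ann_ker_Q_TQ _ _ hchi hg.
Qed.

Lemma dual_Q_le phi psi : dual_le phi psi <-> dual_le (dual_Q phi) (dual_Q psi).
Proof.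
split=> [le_phi_psi g hg g_ge0 | le_Q f hf f_ge0].
  by apply: le_phi_psi; [exact: FBL_map | move=> y; exact: g_ge0].
have := le_Q _ (FBL_map iota_lin iota_le _ hf) (fun x => f_ge0 _).
by rewrite /dual_Q fbl_mapK.
Qed.

Lemma dual_norm_Q phi : dual_norm (dual_Q phi) = dual_norm phi.
Proof.
rewrite /dual_norm; congr ereal_sup; apply/seteqP; split.
  move=> _ [g [hg hn] <-]; exists (Q g) => //; split; first exact: FBL_map.
  exact: le_trans (fblnorm_map_le _ _ _) hn.
move=> _ [f [hf hn] <-]; exists (T f); last by rewrite /dual_Q fbl_mapK.
by split; [exact: FBL_map | rewrite fblnorm_T].
Qed.

Lemma dual_Q_isometric_order_iso : dual_isometric_order_iso F E dual_Q ann_ker_Q.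
Proof.
split; first exact: dual_Q_ann.
split; first by move=> phi phi' _ _ eq_phi g hg; apply: eq_phi; exact: FBL_map.
split; first by [].
split.
  move=> phi psi _ _ eq_Q f hf.
  by have := eq_Q _ (FBL_map iota_lin iota_le _ hf); rewrite /dual_Q fbl_mapK.
split; first exact: dual_Q_onto.
split; first by move=> phi psi _ _; exact: dual_Q_le.
by move=> phi _; exact: dual_norm_Q.
Qed.

End ContractiveRetract.

Theorem corollary2p7 (R : realType) (E F : completeNormedModType R)
  (iota : F -> E) (P : E -> F)
  (iota_lin : forall (a : R) (u v : F), iota (a *: u + v) = a *: iota u + iota v)
  (iota_isom : forall y : F, `|iota y| = `|y|)
  (P_lin : forall (a : R) (u v : E), P (a *: u + v) = a *: P u + P v)
  (P_proj : forall y : F, P (iota y) = y)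
  (P_norm : forall x : E, `|P x| <= `|x|) :
  (exists T : (dualsp F -> R) -> (dualsp E -> R),
      fbl_isometric_order_embedding F E T /\
      (T @` FBL F `<=` FBL E /\ is_closed_sublattice (T @` FBL F)))
  /\
  (exists (J : set ((dualsp E -> R) -> R))
          (S : ((dualsp F -> R) -> R) -> ((dualsp E -> R) -> R)),
      [/\ is_band J, wstar_closed J & dual_isometric_order_iso F E S J]).
Proof.
have iota_le y : `|iota y| <= `|y| by rewrite iota_isom.
split.
  exists (fbl_map iota_lin iota_le); split.
    exact: T_isometric_order_embedding iota_lin iota_le P_lin P_norm P_proj.
  split; first by move=> _ [f hf <-]; exact: FBL_map.
  exact: T_range_closed_sublattice iota_lin iota_le P_lin P_norm P_proj.
exists (ann_ker_Q P_lin P_norm), (dual_Q P_lin P_norm); split.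
- exact: ann_ker_Q_band iota_lin iota_le P_lin P_norm P_proj.
- exact: ann_ker_Q_wstar_closed.
- exact: dual_Q_isometric_order_iso iota_lin iota_le P_lin P_norm P_proj.
Qed.
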